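(* Let $\{A_m\}_{m\ge0}$ and $\{B_m\}_{m\ge0}$ be integer-valued random processes with $A_0=B_0$. Suppose there exist $p^A_{ik}\in[0,1]$ such that for all $m\ge0$ and $k,i,i_0,\dots,i_{m-1}\in\mathbb{Z}$ (whenever the conditional probabilities are defined) $$p^A_{ik}=\mathbb{P}(A_{m+1}=k\mid A_{m+1}\ne i,A_m=i)=\mathbb{P}(A_{m+1}=k\mid A_{m+1}\ne i,A_m=i,A_{m-1}=i_{m-1},\dots,A_0=i_0),$$ and similarly for $B_m$ with numbers $p^B_{ik}$, and assume $p^A_{ik}=p^B_{ik}$ for all $i,k\in\mathbb{Z}$. Suppose further that for all $m\ge0$ and $i,i_0,\dots,i_{m-1},j_0,\dots,j_{m-1}\in\mathbb{Z}$ (whenever defined) $$\mathbb{P}(A_{m+1}\ne i\mid A_m=i,A_{m-1}=i_{m-1},\dots,A_0=i_0)\ge \mathbb{P}(B_{m+1}\ne i\mid B_m=i,B_{m-1}=j_{m-1},\dots,B_0=j_0).$$ Then for every $t\in\mathbb{N}$ and $\delta>0$, $$\mathbb{P}\Big(\max_{0\le m\le t}|A_m|\ge\delta\Big)\ge\mathbb{P}\Big(\max_{0\le m\le t}|B_m|\ge\delta\Big).$$ *)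

From HB Require Import structures.
From mathcomp Require Import all_boot all_order all_algebra.
From mathcomp Require Import all_classical all_reals all_analysis.
Set Implicit Arguments. Unset Strict Implicit. Unset Printing Implicit Defensive.
Import Order.TTheory GRing.Theory Num.Theory.
Local Open Scope classical_set_scope.
Local Open Scope ring_scope.

(* Elementary conditional probability P(E | F) = P(E ∩ F) / P(F),
   used only when P(F) > 0 ("whenever defined"). *)
Definition condprob d (T : measurableType d) (R : realType)
  (P : probability T R) (E F : set T) : R :=
  fine (P (E `&` F)) / fine (P F).

Definition hist d (T : measurableType d) (X : nat -> T -> int)
  (m : nat) (h : nat -> int) : set T :=
  [set w | forall j, (j < m)%N -> X j w = h j].

(* Let S be the finite set of integers of absolute value below delta, so that
   the claim compares the probabilities of staying in S up to time t.  Choose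
   jump probabilities th m i between the conditional jump probabilities of B
   and those of A after any history ending in state i at time m, and let W n i
   be the probability that the Markov chain with these jump probabilities and
   with jump distribution p leaves S during the last n steps, starting from i.
   Jumping never decreases W, so the potential
     sum over histories h in S^(m+1) of P(h) (W (t - m) (last h) - 1)
   is nondecreasing in m along A and nonincreasing along B.  The two potentials
   agree at m = 0, and at m = t they are minus the probabilities of staying
   in S. *)

From HB Require Import structures.
From mathcomp Require Import all_boot all_order all_algebra.
From mathcomp Require Import all_classical all_reals all_analysis.
From mathcomp Require Import ring zify.
Import Order.TTheory GRing.Theory Num.Theory.
Set Implicit Arguments. Unset Strict Implicit. Unset Printing Implicit Defensive.
Local Open Scope classical_set_scope.
Local Open Scope ring_scope.

Section Words.
Variables (V : eqType) (S : seq V).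

Fixpoint words n : seq (seq V) :=
  if n is n'.+1 then [seq rcons h k | h <- words n', k <- S] else [:: [::]].

Lemma big_words_rcons (M : nmodType) (F : seq V -> M) n :
  \sum_(h <- words n.+1) F h = \sum_(h <- words n) \sum_(k <- S) F (rcons h k).
Proof. exact: big_allpairs_dep. Qed.

Lemma words_rconsP n h :
  h \in words n.+1 -> exists2 h', h' \in words n & exists2 k, k \in S & h = rcons h' k.
Proof. by move=> /allpairsP [[h' k] /= [h'n kS ->]]; exists h' => //; exists k. Qed.

Lemma size_words n h : h \in words n -> size h = n.
Proof.
elim: n h => [|n IH] h; first by rewrite inE => /eqP ->.
by move=> /words_rconsP [h' /IH <- [k _ ->]]; rewrite size_rcons.
Qed.

Lemma last_words n h x0 : h \in words n.+1 -> last x0 h \in S.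
Proof. by move=> /words_rconsP [h' _ [k kS ->]]; rewrite last_rcons. Qed.

End Words.

Section EscapeComparison.
Variables (R : numDomainType) (S : seq int) (p : int -> int -> R).
Hypotheses (uniq_S : uniq S) (p_ge0 : forall i k, 0 <= p i k).

Definition p_out i := 1 - \sum_(k <- S | k != i) p i k.
Hypothesis p_out_ge0 : forall i, 0 <= p_out i.

Definition jump_gain (f : int -> R) i :=
  \sum_(k <- S | k != i) p i k * f k + p_out i - f i.

Variables (t : nat) (th : nat -> int -> R).
Hypothesis th01 : forall m i, 0 <= th m i <= 1.

(* [escape n i]: probability of leaving [S] during the times [t - n, ..., t - 1]
   from state [i], for the chain jumping at time [m] with probability [th m],
   according to the kernel [p] (and out of [S] with probability [p_out]). *)
Fixpoint escape n i :=
  if n is n'.+1 then escape n' i + th (t - n) i * jump_gain (escape n') i else 0.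

Lemma jump_gain_escape_ge0 n i : 0 <= jump_gain (escape n) i.
Proof.
elim: n i => [|n IH] i.
  by rewrite /jump_gain /= big1 ?add0r ?subr0 // => k _; rewrite mulr0.
have -> : jump_gain (escape n.+1) i = (1 - th (t - n.+1) i) * jump_gain (escape n) i
    + \sum_(k <- S | k != i) p i k * (th (t - n.+1) k * jump_gain (escape n) k).
  rewrite [in LHS]/jump_gain /=; under eq_bigr do rewrite mulrDr.
  by rewrite big_split /= [jump_gain (escape n) i]/jump_gain; ring.
have /andP [th0 th1] := th01 (t - n.+1) i.
apply: addr_ge0; first by rewrite mulr_ge0 // subr_ge0.
apply: sumr_ge0 => k _.
by rewrite !mulr_ge0 //; case/andP: (th01 (t - n.+1) k).
Qed.

Definition kernel_law (a J : seq int -> R) := forall m h, (m < t)%N -> h \in words S m.+1 ->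
  a (rcons h (last 0 h)) = a h - J h /\
  forall k, k != last 0 h -> a (rcons h k) = J h * p (last 0 h) k.

Definition potential (a : seq int -> R) m :=
  \sum_(h <- words S m.+1) a h * (escape (t - m) (last 0 h) - 1).

Lemma potential_increment a J m : kernel_law a J -> (m < t)%N ->
  potential a m.+1 - potential a m = \sum_(h <- words S m.+1)
    (J h - th m (last 0 h) * a h) * jump_gain (escape (t - m.+1)) (last 0 h).
Proof.
move=> law mt; rewrite /potential big_words_rcons -sumrB; apply: eq_big_seq => h hw.
have [stay jump] := law m h mt hw.
have tm : (t - m = (t - m.+1).+1)%N by rewrite subnSK.
have ttm : (t - (t - m.+1).+1 = m)%N by rewrite -tm subKn // ltnW.
rewrite tm [escape _.+1 _]/= ttm (bigD1_seq (last 0 h)) ?(last_words _ hw) //=.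
rewrite last_rcons stay (eq_bigr (fun k => J h * (p (last 0 h) k * escape (t - m.+1) k)
    - J h * p (last 0 h) k)); last by move=> k kh; rewrite last_rcons jump // mulrA mulrBr mulr1.
by rewrite sumrB -!big_distrr /= /jump_gain /p_out; ring.
Qed.

Lemma potential_final a : potential a t = - \sum_(h <- words S t.+1) a h.
Proof. by rewrite /potential subnn -sumrN; apply: eq_bigr => h _ /=; ring. Qed.

Lemma potential_nondecreasing a J : kernel_law a J ->
    (forall m h, (m < t)%N -> h \in words S m.+1 -> th m (last 0 h) * a h <= J h) ->
  potential a 0 <= potential a t.
Proof.
move=> law slow; suff : forall m, (m <= t)%N -> potential a 0 <= potential a m by apply.
elim=> [//|m IH] mt; apply: (le_trans (IH (ltnW mt))); rewrite -subr_ge0.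
rewrite (potential_increment law) // big_seq; apply: sumr_ge0 => h hw.
by rewrite mulr_ge0 ?jump_gain_escape_ge0 // subr_ge0 slow.
Qed.

Lemma potential_nonincreasing a J : kernel_law a J ->
    (forall m h, (m < t)%N -> h \in words S m.+1 -> J h <= th m (last 0 h) * a h) ->
  potential a t <= potential a 0.
Proof.
move=> law fast; suff : forall m, (m <= t)%N -> potential a m <= potential a 0 by apply.
elim=> [//|m IH] mt; apply: le_trans (IH (ltnW mt)); rewrite -subr_le0.
rewrite (potential_increment law) // big_seq; apply: sumr_le0 => h hw.
by rewrite mulr_le0_ge0 ?jump_gain_escape_ge0 // subr_le0 fast.
Qed.

Theorem kernel_law_sum_le a b Ja Jb :
    {in words S 1, a =1 b} -> kernel_law a Ja -> kernel_law b Jb ->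
    (forall m h, (m < t)%N -> h \in words S m.+1 -> th m (last 0 h) * a h <= Ja h) ->
    (forall m h, (m < t)%N -> h \in words S m.+1 -> Jb h <= th m (last 0 h) * b h) ->
  \sum_(h <- words S t.+1) a h <= \sum_(h <- words S t.+1) b h.
Proof.
move=> ab lawa lawb slowa fastb; rewrite -lerN2 -!potential_final.
have start : potential b 0 = potential a 0 by apply: eq_big_seq => h /ab ->.
apply: le_trans (potential_nonincreasing lawb fastb) _.
by rewrite start; apply: potential_nondecreasing lawa slowa.
Qed.

End EscapeComparison.

(* Where the restriction of [p i] to [S] has mass above one, no history ending
   in [i] jumps with positive probability, so zeroing [p i] there is harmless
   and makes [p_out] nonnegative. *)
Definition clip_kernel (R : numDomainType) (S : seq int) (p : int -> int -> R) i k :=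
  if \sum_(k' <- S | k' != i) p i k' <= 1 then p i k else 0.

Lemma clip_kernel_ge0 (R : numDomainType) S (p : int -> int -> R) :
  (forall i k, 0 <= p i k) -> forall i k, 0 <= clip_kernel S p i k.
Proof. by move=> p0 i k; rewrite /clip_kernel; case: ifP. Qed.

Lemma p_out_clip_ge0 (R : numDomainType) S (p : int -> int -> R) i :
  0 <= p_out S (clip_kernel S p) i.
Proof.
rewrite /p_out /clip_kernel /=; case: (boolP (\sum_(k <- S | k != i) p i k <= 1)) => [le1|_].
  by rewrite subr_ge0.
by rewrite big1 // subr0.
Qed.

Section Probability.
Variables (R : realType) (d : measure_display) (T : measurableType d)
  (P : probability T R).

Definition prob (E : set T) : R := fine (P E).

Lemma probE E : measurable E -> P E = (prob E)%:E.
Proof. by move=> mE; rewrite /prob fineK // fin_num_measure. Qed.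

Lemma prob_ge0 E : 0 <= prob E.
Proof. exact/fine_ge0/measure_ge0. Qed.

Lemma prob_gt0E E : measurable E -> (0 < P E)%E = (0 < prob E).
Proof. by move=> mE; rewrite probE // lte_fin. Qed.

Lemma prob_eq0 E : prob E <= 0 -> prob E = 0.
Proof. by move=> E0; apply/eqP; rewrite eq_le E0 prob_ge0. Qed.

Lemma le_prob E F : measurable E -> measurable F -> E `<=` F -> prob E <= prob F.
Proof. by move=> mE mF EF; rewrite -lee_fin -!probE // le_measure ?inE. Qed.

Lemma probDI E F : measurable E -> measurable F ->
  prob E = prob (E `\` F) + prob (E `&` F).
Proof.
move=> mE mF; apply: EFin_inj.
by rewrite EFinD -!probE //; [exact: measureDI | exact: measurableI | exact: measurableD].
Qed.

Variables (X : nat -> T -> int).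
Hypothesis mX : forall m k, measurable [set w | X m w = k].

Definition cyl (h : seq int) : set T := hist X (size h) (nth 0 h).

Definition stays (S : seq int) n : set T := [set w | forall j, (j < n)%N -> X j w \in S].

Lemma cyl_rcons h k : cyl (rcons h k) = cyl h `&` [set w | X (size h) w = k].
Proof.
rewrite /cyl /hist size_rcons; apply/seteqP; split => w /=.
  move=> H; split; last by have := H (size h); rewrite nth_rcons ltnn eqxx; apply.
  by move=> j jh; have := H j; rewrite nth_rcons jh; apply; rewrite ltnW.
move=> [H Xk] j; rewrite ltnS leq_eqVlt nth_rcons.
by case/orP => [/eqP ->|jh]; [rewrite ltnn eqxx | rewrite jh; apply: H].
Qed.

Lemma staysS S n : stays S n.+1 = stays S n `&` [set w | X n w \in S].
Proof.
apply/seteqP; split => w /=.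
  by move=> H; split => [j jn|]; apply: H => //; exact: ltnW.
by move=> [H XS] j; rewrite ltnS leq_eqVlt => /orP [/eqP ->|/H].
Qed.

Lemma measurable_mem_seq n (s : seq int) : measurable [set w | X n w \in s].
Proof.
elim: s => [|k s IH].
  by rewrite (_ : [set w | _] = set0) //; apply/seteqP; split.
rewrite (_ : [set w | _] = [set w | X n w = k] `|` [set w | X n w \in s]).
  exact: measurableU.
apply/seteqP; split => w; rewrite /= inE; first by case/orP => [/eqP|]; [left | right].
by case=> [->|->]; rewrite ?eqxx ?orbT.
Qed.

Lemma measurable_cyl h : measurable (cyl h).
Proof.
elim/last_ind: h => [|h k IH]; last by rewrite cyl_rcons; exact: measurableI.
by rewrite (_ : cyl [::] = setT); [exact: measurableT | apply/seteqP; split].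
Qed.

Lemma measurable_stays S n : measurable (stays S n).
Proof.
elim: n => [|n IH]; last by rewrite staysS; apply: measurableI => //; exact: measurable_mem_seq.
by rewrite (_ : stays S 0 = setT); [exact: measurableT | apply/seteqP; split].
Qed.

Lemma prob_mem_sum E n (s : seq int) : measurable E -> uniq s ->
  \sum_(k <- s) prob (E `&` [set w | X n w = k]) = prob (E `&` [set w | X n w \in s]).
Proof.
move=> mE; elim: s => [_|k s IH /andP [ks us]].
  by rewrite big_nil (_ : _ `&` _ = set0) /prob ?measure0 //; apply/seteqP; split => w [].
rewrite big_cons IH // addrC [RHS](probDI _ (mX n k)); last first.
  exact: measurableI (measurable_mem_seq _ _).
congr (prob _ + prob _); apply/seteqP; split => w /=.
- move=> [Ew Xs]; split; first by split => //; rewrite inE Xs orbT.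
  by move=> Xk; move: ks; rewrite -Xk Xs.
- by move=> [[Ew]]; rewrite inE => /orP [/eqP Xk /(_ Xk) | Xs _].
- by move=> [Ew Xk]; split; rewrite // inE Xk eqxx.
- by move=> [[Ew _] Xk].
Qed.

Lemma sum_prob_cyl S E n : measurable E -> uniq S ->
  \sum_(h <- words S n) prob (E `&` cyl h) = prob (E `&` stays S n).
Proof.
move=> + uS; elim: n E => [|n IH] E mE.
  by rewrite big_seq1; congr (prob (_ `&` _)); apply/seteqP; split.
rewrite big_words_rcons staysS setIA setIAC -IH; last first.
  exact: measurableI (measurable_mem_seq _ _).
apply: eq_big_seq => h hw; rewrite setIAC -prob_mem_sum //; last first.
  exact: measurableI (measurable_cyl _).
by apply: eq_bigr => k _; rewrite cyl_rcons (size_words hw) setIA.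
Qed.

End Probability.

Section JumpMasses.
Variables (R : realType) (d : measure_display) (T : measurableType d)
  (P : probability T R) (X : nat -> T -> int).
Hypothesis mX : forall m k, measurable [set w | X m w = k].

Definition mass h := prob P (cyl X h).
Definition jump_mass h := prob P (cyl X h `&` [set w | X (size h) w != last 0 h]).

Lemma neq_setC m i : [set w | X m w != i] = ~` [set w | X m w = i].
Proof. by apply/seteqP; split => w /= /eqP. Qed.

Lemma measurable_neq m i : measurable [set w | X m w != i].
Proof. by rewrite neq_setC; exact: measurableC. Qed.

Lemma mass_rcons_last h : mass (rcons h (last 0 h)) = mass h - jump_mass h.
Proof.
have mcyl := measurable_cyl mX h.
rewrite /mass /jump_mass cyl_rcons [prob P (cyl X h)](probDI P mcyl (mX (size h) (last 0 h))).
by rewrite neq_setC -setDE addrAC subrr add0r.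
Qed.

Lemma cyl_hist m h : size h = m.+1 ->
  [set w | X m w = last 0 h] `&` hist X m (nth 0 h) = cyl X h.
Proof.
move=> sh; rewrite /cyl /hist -nth_last sh /=; apply/seteqP; split => w /=.
  by move=> [Xm H] j; rewrite ltnS leq_eqVlt => /orP [/eqP ->|/H].
by move=> H; split => [|j jm]; apply: H; rewrite // ltnW.
Qed.

Lemma condprob_jump_cyl m h : size h = m.+1 ->
  condprob P [set w | X m.+1 w != last 0 h] ([set w | X m w = last 0 h] `&` hist X m (nth 0 h))
  = jump_mass h / mass h.
Proof. by move=> sh; rewrite /condprob cyl_hist // setIC /jump_mass sh. Qed.

Lemma jump_mass_le_mass h : jump_mass h <= mass h.
Proof. by rewrite -subr_ge0 -mass_rcons_last; exact: prob_ge0. Qed.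

Variable p : int -> int -> R.
Hypothesis kernel_condprob : forall m i k (h : nat -> int),
  (0 < P ([set w | X m.+1 w != i] `&` [set w | X m w = i] `&` hist X m h))%E ->
  p i k = condprob P [set w | X m.+1 w = k]
            ([set w | X m.+1 w != i] `&` [set w | X m w = i] `&` hist X m h).

Lemma mass_rcons_jump m h k : size h = m.+1 -> k != last 0 h ->
  mass (rcons h k) = jump_mass h * p (last 0 h) k.
Proof.
move=> sh ki.
have jumpE : [set w | X m.+1 w != last 0 h] `&` [set w | X m w = last 0 h] `&`
    hist X m (nth 0 h) = cyl X h `&` [set w | X (size h) w != last 0 h].
  by rewrite -setIA cyl_hist // setIC sh.
have landE : [set w | X m.+1 w = k] `&` (cyl X h `&` [set w | X (size h) w != last 0 h])
    = cyl X (rcons h k).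
  rewrite cyl_rcons sh; apply/seteqP; split => w /=; first by move=> [Xk [ch _]].
  by move=> [ch ->].
have mjump := measurableI _ _ (measurable_cyl mX h) (measurable_neq (size h) (last 0 h)).
have [Jpos|J0] := ltrP 0 (jump_mass h).
  have := @kernel_condprob m (last 0 h) k (nth 0 h); rewrite jumpE prob_gt0E // => /(_ Jpos) ->.
  by rewrite /condprob landE mulrC divfK // lt0r_neq0.
have {}J0 : jump_mass h = 0 := prob_eq0 J0.
rewrite J0 mul0r; apply/eqP; rewrite eq_le prob_ge0 andbT -J0.
by apply: le_prob; [exact: measurable_cyl | exact: mjump | rewrite -landE; exact: subIsetr].
Qed.

Lemma jump_kernel_sum_le1 m h (s : seq int) : size h = m.+1 -> uniq s -> 0 < jump_mass h ->
  \sum_(k <- s | k != last 0 h) p (last 0 h) k <= 1.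
Proof.
move=> sh us Jpos; rewrite -(ler_pM2l Jpos) mulr1 big_distrr /= -big_filter.
rewrite (eq_big_seq (fun k => prob P (cyl X h `&` [set w | X (size h) w = k]))); last first.
  by move=> k; rewrite mem_filter => /andP [kh _]; rewrite -(mass_rcons_jump sh kh) /mass cyl_rcons.
rewrite prob_mem_sum ?filter_uniq //; last exact: measurable_cyl.
apply: le_prob; [exact: measurableI (measurable_cyl _ _) (measurable_mem_seq _ _ _)|
  exact: measurableI (measurable_cyl _ _) (measurable_neq _ _)|].
by move=> w [ch] /=; rewrite mem_filter => /andP [Xh _].
Qed.

Lemma kernel_law_mass S t : uniq S ->
  kernel_law S (clip_kernel S p) t mass jump_mass.
Proof.
move=> uS m h _ hw; have sh := size_words hw; split; first exact: mass_rcons_last.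
move=> k kh; rewrite (mass_rcons_jump sh kh) /clip_kernel; case: ifPn => // hsum.
rewrite [jump_mass h]prob_eq0 ?mul0r // leNgt.
by apply/negP => /(jump_kernel_sum_le1 sh uS); apply/negP.
Qed.

End JumpMasses.

Lemma abs_lt_enum (R : archiRealFieldType) (delta : R) :
  exists2 S : seq int, uniq S & forall k, (k \in S) = (`|k|%:~R < delta).
Proof.
pose N := Num.Def.archi_bound `|delta|.
have deltaN : delta < N%:R by apply: le_lt_trans (ler_norm _) (archi_boundP _).
exists [seq k <- [seq i%:Z - N%:Z | i <- iota 0 (2 * N).+1] | `|k|%:~R < delta].
  by rewrite filter_uniq // map_inj_uniq ?iota_uniq // => x y; lia.
move=> k; rewrite mem_filter andb_idr // => kdelta.
have kN : `|k| < N%:Z by rewrite -(ltr_int R) (lt_trans kdelta).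
by apply/mapP; exists (absz (k + N%:Z)); [rewrite mem_iota; lia | lia].
Qed.

Lemma bigmax_abs_geP (R : realDomainType) (delta : R) (S : seq int) n (f : nat -> int) :
    0 < delta -> (forall k, (k \in S) = (`|k|%:~R < delta)) ->
  (delta <= (\big[Num.max/0]_(m < n) `|f m|)%:~R) <-> ~ (forall j, (j < n)%N -> f j \in S).
Proof.
move=> delta_gt0 memS; rewrite leNgt; split => [/negP max_ge fS|fS]; last first.
  apply/negP=> max_lt; apply: fS => j jn; rewrite memS (le_lt_trans _ max_lt) // ler_int.
  exact: (le_bigmax _ (fun m : 'I_n => `|f m|) (Ordinal jn)).
apply: max_ge; apply: (big_ind (fun x : int => x%:~R < delta)) => //.
- by move=> x y; rewrite /Num.max; case: ifP.
- by move=> m _; rewrite -memS fS.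
Qed.

Section IntermediateRates.
Variables (R : realType) (d : measure_display) (T : measurableType d)
  (P : probability T R) (A B : nat -> T -> int).
Hypotheses (mA : forall m k, measurable [set w | A m w = k])
  (mB : forall m k, measurable [set w | B m w = k]).
Hypothesis jump_condprob_le : forall (m : nat) (i : int) (hA hB : nat -> int),
  (0 < P ([set w | A m w = i] `&` hist A m hA))%E ->
  (0 < P ([set w | B m w = i] `&` hist B m hB))%E ->
  condprob P [set w | B m.+1 w != i] ([set w | B m w = i] `&` hist B m hB)
    <= condprob P [set w | A m.+1 w != i] ([set w | A m w = i] `&` hist A m hA).

Lemma intermediate_jump_rates (S : seq int) : exists th : nat -> int -> R,
  [/\ forall m i, 0 <= th m i <= 1,
      forall m h, h \in words S m.+1 -> th m (last 0 h) * mass P A h <= jump_mass P A h &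
      forall m h, h \in words S m.+1 -> jump_mass P B h <= th m (last 0 h) * mass P B h].
Proof.
pose rate h := if 0 < mass P B h then jump_mass P B h / mass P B h else 0.
have rate01 h : 0 <= rate h <= 1.
  rewrite /rate; case: ifP => [mh|_]; last by rewrite lexx ler01.
  by rewrite divr_ge0 ?prob_ge0 ?(ltW mh) //= ler_pdivrMr // mul1r (jump_mass_le_mass P mB).
exists (fun m i => \big[Num.max/0]_(h <- words S m.+1 | last 0 h == i) rate h); split.
- move=> m i; rewrite bigmax_ge_id /=; apply: bigmax_le => [|h _]; first exact: ler01.
  by case/andP: (rate01 h).
- move=> m h hw; have [mh|] := ltrP 0 (mass P A h); last first.
    by move=> mh; have mh0 : mass P A h = 0 := prob_eq0 mh; rewrite mh0 mulr0 prob_ge0.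
  rewrite -ler_pdivlMr // big_seq_cond; apply: bigmax_le; first by rewrite divr_ge0 ?prob_ge0.
  move=> h' /andP [h'w /eqP lasth']; rewrite /rate; case: ifPn => [mh'|_]; last first.
    by rewrite divr_ge0 ?prob_ge0.
  have [sh sh'] := (size_words hw, size_words h'w).
  rewrite -(condprob_jump_cyl P A sh) -(condprob_jump_cyl P B sh') lasth'.
  apply: jump_condprob_le; first by rewrite (cyl_hist A sh) (prob_gt0E _ (measurable_cyl mA h)).
  by rewrite -lasth' (cyl_hist B sh') (prob_gt0E _ (measurable_cyl mB h')).
- move=> m h hw; have [mh|] := ltrP 0 (mass P B h); last first.
    move=> mh; have mh0 : mass P B h = 0 := prob_eq0 mh.
    by rewrite mh0 mulr0 -mh0 (jump_mass_le_mass P mB).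
  have -> : jump_mass P B h = rate h * mass P B h by rewrite /rate mh divfK ?gt_eqF.
  by rewrite ler_pM2r //; apply: le_bigmax_seq hw _.
Qed.

End IntermediateRates.

Lemma eq_cyl d (T : measurableType d) (X Y : nat -> T -> int) h :
  (forall j, (j < size h)%N -> X j =1 Y j) -> cyl X h = cyl Y h.
Proof.
move=> XY; apply/seteqP; split => w H j jh; first by rewrite -XY // H.
by rewrite XY // H.
Qed.

Lemma exceed_prob_words (R : realType) d (T : measurableType d) (P : probability T R)
    (X : nat -> T -> int) (S : seq int) (delta : R) n :
    (forall m k, measurable [set w | X m w = k]) -> uniq S -> 0 < delta ->
    (forall k, (k \in S) = (`|k|%:~R < delta)) ->
  P [set w | delta <= (\big[Num.max/0]_(m < n) `|X m w|)%:~R] =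
  (1 - \sum_(h <- words S n) mass P X h)%:E.
Proof.
move=> mX uS delta_gt0 memS.
have -> : [set w | delta <= (\big[Num.max/0]_(m < n) `|X m w|)%:~R] = ~` stays X S n.
  apply/seteqP; split => w;
    [exact: (@bigmax_abs_geP _ _ _ n (X^~ w) delta_gt0 memS).1 |
     exact: (@bigmax_abs_geP _ _ _ n (X^~ w) delta_gt0 memS).2].
have mstay := measurable_stays mX S n.
rewrite probability_setC // probE // -[stays X S n]setTI -sum_prob_cyl //.
by under eq_bigr do rewrite setTI.
Qed.

Theorem proposition1 (R : realType) (d : measure_display)
  (T : measurableType d) (P : probability T R)
  (A B : nat -> T -> int)
  (mA : forall m k, measurable [set w | A m w = k])
  (mB : forall m k, measurable [set w | B m w = k])
  (A0B0 : forall w, A 0%N w = B 0%N w)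
  (pA pB : int -> int -> R)
  (pA01 : forall i k, 0 <= pA i k <= 1)
  (pB01 : forall i k, 0 <= pB i k <= 1)
  (HpA : forall (m : nat) (i k : int) (h : nat -> int),
     ((0 < P ([set w | A m.+1 w != i] `&` [set w | A m w = i]))%E ->
       pA i k = condprob P [set w | A m.+1 w = k]
                  ([set w | A m.+1 w != i] `&` [set w | A m w = i])) /\
     ((0 < P ([set w | A m.+1 w != i] `&` [set w | A m w = i] `&` hist A m h))%E ->
       pA i k = condprob P [set w | A m.+1 w = k]
                  ([set w | A m.+1 w != i] `&` [set w | A m w = i] `&` hist A m h)))
  (HpB : forall (m : nat) (i k : int) (h : nat -> int),
     ((0 < P ([set w | B m.+1 w != i] `&` [set w | B m w = i]))%E ->
       pB i k = condprob P [set w | B m.+1 w = k]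
                  ([set w | B m.+1 w != i] `&` [set w | B m w = i])) /\
     ((0 < P ([set w | B m.+1 w != i] `&` [set w | B m w = i] `&` hist B m h))%E ->
       pB i k = condprob P [set w | B m.+1 w = k]
                  ([set w | B m.+1 w != i] `&` [set w | B m w = i] `&` hist B m h)))
  (HpAB : forall i k, pA i k = pB i k)
  (Hjump : forall (m : nat) (i : int) (hA hB : nat -> int),
     (0 < P ([set w | A m w = i] `&` hist A m hA))%E ->
     (0 < P ([set w | B m w = i] `&` hist B m hB))%E ->
     condprob P [set w | B m.+1 w != i] ([set w | B m w = i] `&` hist B m hB)
       <= condprob P [set w | A m.+1 w != i] ([set w | A m w = i] `&` hist A m hA))
  (t : nat) (delta : R) (Hdelta : 0 < delta) :
  (P [set w | (delta <= (\big[Num.max/0]_(m < t.+1) `|B m w|)%:~R)%R]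
     <= P [set w | (delta <= (\big[Num.max/0]_(m < t.+1) `|A m w|)%:~R)%R])%E.
Proof.
have [S uS memS] := abs_lt_enum delta.
have [th [th01 slowA fastB]] := intermediate_jump_rates mA mB Hjump S.
have lawA : kernel_law S (clip_kernel S pA) t (mass P A) (jump_mass P A).
  by apply: (kernel_law_mass mA) uS => m i k h; exact: (HpA m i k h).2.
have lawB : kernel_law S (clip_kernel S pA) t (mass P B) (jump_mass P B).
  by apply: (kernel_law_mass mB) uS => m i k h; rewrite HpAB; exact: (HpB m i k h).2.
rewrite !(exceed_prob_words P _ _ uS Hdelta memS) // lee_fin lerD2l lerN2.
apply: (kernel_law_sum_le uS _ _ th01 _ lawA lawB).
- by apply: clip_kernel_ge0 => i k; case/andP: (pA01 i k).
- exact: p_out_clip_ge0.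
- move=> h /size_words h1; congr prob; apply: eq_cyl => j; rewrite h1.
  by case: j => // _ w; exact: A0B0.
- by move=> m h _; exact: slowA.
- by move=> m h _; exact: fastB.
Qed.
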